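(* Let $\Phi\colon\mathrm{Cl}_{r,s+1}\to\mathrm{Cl}_{s,r+1}$ be the algebra isomorphism determined on orthonormal generators by $\Phi(z_i)=b_ib_{r+1}$ ($i=1,\ldots,r$), $\Phi(\zeta_j)=a_jb_{r+1}$ ($j=1,\ldots,s$), $\Phi(\zeta_{s+1})=b_{r+1}$, where $z_1,\ldots,z_r,\zeta_1,\ldots,\zeta_{s+1}$ are orthonormal generators of $\mathrm{Cl}_{r,s+1}$ ($\langle z_i,z_i\rangle=1$, $\langle\zeta_j,\zeta_j\rangle=-1$) and $a_1,\ldots,a_s,b_1,\ldots,b_{r+1}$ orthonormal generators of $\mathrm{Cl}_{s,r+1}$ ($\langle a_i,a_i\rangle=1$, $\langle b_j,b_j\rangle=-1$). Let $(V,\langle\cdot\,,\cdot\rangle_V)$ be an admissible $\mathrm{Cl}_{s,r+1}$-module with representation $J$ and let $\{v_\alpha\}$ be an integral basis of it such that each $J_{a_i}$ and each $J_{b_j}$ permutes $\{v_\alpha\}$ up to sign. Then $\{v_\alpha\}$ is also an integral basis of the admissible $\mathrm{Cl}_{r,s+1}$-module $(V,\langle\cdot\,,\cdot\rangle_V)$ with representation $J\circ\Phi$.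
   Context: A scalar product is a real symmetric non-degenerate bilinear form. $\mathrm{Cl}_{p,q}$ is the Clifford algebra generated by $\mathbb R^{p,q}$ ($\mathbb R^{p+q}$ with quadratic form $x_1^2+\dots+x_p^2-x_{p+1}^2-\dots-x_{p+q}^2$) with relation $z^2=-\langle z,z\rangle\cdot1$. A $\mathrm{Cl}_{p,q}$-module $V$ with representation $J$ is admissible if it carries a scalar product with $\langle J_zu,v\rangle_V=-\langle u,J_zv\rangle_V$ for all $z,u,v$. An integral basis of an admissible module is a basis $\{v_\alpha\}$ with $\langle v_\alpha,v_\beta\rangle_V=0$ for $\alpha\neq\beta$, $\langle v_\alpha,v_\alpha\rangle_V=\pm1$, and $\langle J_{x}v_\alpha,v_\beta\rangle_V\in\{1,-1,0\}$ for every orthonormal generator $x$ and all $\alpha,\beta$. An operator permutes $\{v_\alpha\}$ up to sign if it maps each $v_\alpha$ to $\pm v_\beta$ for some $\beta$. *)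

From HB Require Import structures.
From mathcomp Require Import all_boot all_order all_algebra.
Set Implicit Arguments. Unset Strict Implicit. Unset Printing Implicit Defensive.
Import Order.TTheory GRing.Theory Num.Theory.
Local Open Scope ring_scope.

(* A scalar product
   on V is given by its Gram matrix S (symmetric, invertible = non-degenerate).
   The orthonormal generators of Cl_{p,q} are indexed by 'I_(p+q): the first p
   have <x,x> = 1, the last q have <x,x> = -1.  A representation J of Cl_{p,q}
   on V is determined by the matrices J x of the generators x, which must
   satisfy the Clifford relations  J x J y + J y J x = -2 <x,y> Id. *)

Section Clifford.
Variable R : realFieldType.

Definition sig (p q : nat) (i : 'I_(p + q)) : R := if (i < p)%N then 1 else -1.

Definition gen_ip (p q : nat) (i j : 'I_(p + q)) : R :=
  if i == j then sig i else 0.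

Definition is_clrep (p q n : nat) (J : 'I_(p + q) -> 'M[R]_n) : Prop :=
  forall i j : 'I_(p + q), J i *m J j + J j *m J i = (- (2%:R * gen_ip i j))%:M.

Definition scalar_product (n : nat) (S : 'M[R]_n) : Prop :=
  S^T = S /\ S \in unitmx.

Definition form (n : nat) (S : 'M[R]_n) (u v : 'cV[R]_n) : R :=
  (u^T *m S *m v) 0 0.

Definition Jvec (p q n : nat) (J : 'I_(p + q) -> 'M[R]_n) (z : 'rV[R]_(p + q))
  : 'M[R]_n := \sum_(i < p + q) z 0 i *: J i.

Definition admissible (p q n : nat) (S : 'M[R]_n) (J : 'I_(p + q) -> 'M[R]_n)
  : Prop :=
  scalar_product S /\ is_clrep J /\
  forall (z : 'rV[R]_(p + q)) (u v : 'cV[R]_n),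
    form S (Jvec J z *m u) v = - form S u (Jvec J z *m v).

Definition integral_basis (p q n : nat) (S : 'M[R]_n)
  (J : 'I_(p + q) -> 'M[R]_n) (B : 'M[R]_n) : Prop :=
  [/\ B \in unitmx,
      (forall a b : 'I_n, a != b -> form S (col a B) (col b B) = 0),
      (forall a : 'I_n, form S (col a B) (col a B) = 1 \/
                        form S (col a B) (col a B) = -1) &
      (forall (x : 'I_(p + q)) (a b : 'I_n),
         form S (J x *m col a B) (col b B) = 1 \/
         form S (J x *m col a B) (col b B) = -1 \/
         form S (J x *m col a B) (col b B) = 0)].

Definition permutes_up_to_sign (n : nat) (A B : 'M[R]_n) : Prop :=
  forall a : 'I_n, exists (b : 'I_n) (e : R),
    (e = 1 \/ e = -1) /\ A *m col a B = e *: col b B.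

(* Generators of Cl_{s,r+1}, indexed by 'I_(s + r.+1):
   a_j = lshift r.+1 j (j < s),  b_j = rshift s j (j < r+1);
   b_{r+1} is rshift s ord_max. *)
Definition gen_a (s r : nat) (j : 'I_s) : 'I_(s + r.+1) := lshift r.+1 j.
Definition gen_b (s r : nat) (j : 'I_r.+1) : 'I_(s + r.+1) := rshift s j.

(* J o Phi on the generators of Cl_{r,s+1} (indexed by 'I_(r + s.+1):
   z_i = lshift s.+1 i (i < r), zeta_j = rshift r j (j < s+1)):
     Phi z_i = b_i b_{r+1},  Phi zeta_j = a_j b_{r+1} (j <= s),
     Phi zeta_{s+1} = b_{r+1}. *)
Definition JPhi (r s n : nat) (J : 'I_(s + r.+1) -> 'M[R]_n)
  (k : 'I_(r + s.+1)) : 'M[R]_n :=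
  let bl := J (gen_b s (@ord_max r)) in
  match split k with
  | inl i => J (gen_b s (widen_ord (leqnSn r) i)) *m bl
  | inr j => match unlift ord_max j with
             | Some j' => J (gen_a r j') *m bl
             | None => bl
             end
  end.

End Clifford.

Arguments JPhi {R} r s {n} J k.

From Pilot Require Import Defs.
From HB Require Import structures.
From mathcomp Require Import all_boot all_order all_algebra zify.
Import Order.TTheory GRing.Theory Num.Theory.
Set Implicit Arguments. Unset Strict Implicit. Unset Printing Implicit Defensive.
Local Open Scope ring_scope.

(* Write P := J(b_{r+1}).  Every generator of Cl_{r,s+1} is sent either to P or
   to J(y) P with y <> b_{r+1}; since P^2 = 1 and P anticommutes with J(y), the
   products J(y) P are again skew and satisfy the Clifford relations with the
   signs of y reversed, which is exactly the signature swap between the two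
   algebras.  Integrality is inherited because a product of operators permuting
   {v_alpha} up to sign permutes {v_alpha} up to sign, and the matrix entries of
   such an operator in an orthonormal basis lie in {1, -1, 0}. *)

Section Form.
Variables (R : realFieldType) (n : nat) (S : 'M[R]_n).
Implicit Types (A M : 'M[R]_n) (u v : 'cV[R]_n).

Lemma formZl c u v : Defs.form S (c *: u) v = c * Defs.form S u v.
Proof. by rewrite /Defs.form linearZ /= -!scalemxAl mxE. Qed.

Lemma formNr u v : Defs.form S u (- v) = - Defs.form S u v.
Proof. by rewrite /Defs.form mulmxN mxE. Qed.

Lemma form_suml (I : finType) (c : I -> R) (w : I -> 'cV[R]_n) v :
  Defs.form S (\sum_i c i *: w i) v = \sum_i c i * Defs.form S (w i) v.
Proof.
rewrite /Defs.form raddf_sum !mulmx_suml summxE; apply: eq_bigr => i _ /=.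
by rewrite linearZ /= -!scalemxAl mxE.
Qed.

Lemma form_sumr (I : finType) (c : I -> R) (w : I -> 'cV[R]_n) u :
  Defs.form S u (\sum_i c i *: w i) = \sum_i c i * Defs.form S u (w i).
Proof.
rewrite /Defs.form mulmx_sumr summxE; apply: eq_bigr => i _.
by rewrite -!scalemxAr mxE.
Qed.

Definition skew A := forall u v, Defs.form S (A *m u) v = - Defs.form S u (A *m v).

Lemma skew_mul A M : skew A -> skew M -> A *m M = - (M *m A) -> skew (A *m M).
Proof.
move=> skA skM anti u v.
by rewrite -mulmxA skA skM opprK mulmxA anti mulNmx -mulmxA formNr opprK.
Qed.

Lemma skew_Jvec p q (J : 'I_(p + q) -> 'M[R]_n) :
  (forall i, skew (J i)) -> forall z, skew (Jvec J z).
Proof.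
move=> skJ z u v; rewrite /Jvec !mulmx_suml.
under eq_bigr do rewrite -scalemxAl.
under [in RHS]eq_bigr do rewrite -scalemxAl.
rewrite form_suml form_sumr -sumrN; apply: eq_bigr => i _.
by rewrite skJ mulrN.
Qed.

End Form.

Lemma mulrn2I (R : numFieldType) (V : lmodType R) (u v : V) :
  u *+ 2 = v *+ 2 -> u = v.
Proof.
move/(congr1 (fun w => 2^-1 *: w)).
by rewrite -!scaler_nat !scalerA mulVf ?pnatr_eq0 // !scale1r.
Qed.

Section Involution.
Variables (R : pzRingType) (n : nat) (P A C : 'M[R]_n).
Hypothesis P_invol : P *m P = 1%:M.

Lemma mulmx_anticomm_invol :
  P *m C = - (C *m P) -> (A *m P) *m (C *m P) = - (A *m C).
Proof.
by move=> PC; rewrite mulmxA -(mulmxA A) PC mulmxN mulNmx -!mulmxA P_invol mulmx1.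
Qed.

Lemma anticomm_invol_add :
  P *m A = - (A *m P) -> (A *m P) *m P + P *m (A *m P) = 0.
Proof. by move=> PA; rewrite mulmxA PA mulNmx -!mulmxA P_invol mulmx1 addrN. Qed.

End Involution.

Section CliffordRep.
Variables (R : realFieldType) (p q n : nat) (S : 'M[R]_n).
Variable J : 'I_(p + q) -> 'M[R]_n.

Lemma Jvec_delta x : Jvec J (delta_mx 0 x) = J x.
Proof.
rewrite /Jvec (bigD1 x) //= big1 ?addr0 => [|y yx].
  by rewrite mxE !eqxx scale1r.
by rewrite mxE (negbTE yx) andbF scale0r.
Qed.

Lemma admissibleP :
  admissible S J <-> [/\ scalar_product S, is_clrep J & forall x, skew S (J x)].
Proof.
split=> [[SP [CL skJ]] | [SP CL skJ]].
  by split=> // x u v; rewrite -Jvec_delta skJ.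
by split; [|split; last exact: skew_Jvec].
Qed.

Hypothesis CL : is_clrep J.

Lemma clrep_anticomm x y : x != y -> J x *m J y = - (J y *m J x).
Proof.
move=> xy; apply/eqP; rewrite -addr_eq0 CL /gen_ip (negbTE xy).
by rewrite mulr0 oppr0 raddf0.
Qed.

Lemma clrep_sqr x : J x *m J x = (- sig R x)%:M.
Proof.
apply: mulrn2I; rewrite mulr2n CL /gen_ip eqxx -raddfMn /=.
by rewrite mulNrn mulr_natl.
Qed.

End CliffordRep.

Section SignedPermutation.
Variables (R : realFieldType) (n : nat) (S B : 'M[R]_n).

Lemma permutes_up_to_sign_mul (A M : 'M[R]_n) :
  permutes_up_to_sign A B -> permutes_up_to_sign M B ->
  permutes_up_to_sign (A *m M) B.
Proof.
move=> permA permM a; have [c [e [e_sign Mac]]] := permM a.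
have [d [e' [e'_sign Acd]]] := permA c.
exists d, (e * e'); split; last by rewrite -mulmxA Mac -scalemxAr Acd scalerA.
by case: e_sign e'_sign => -> [] ->; rewrite ?mul1r ?mulN1r ?opprK; [left|right|right|left].
Qed.

Hypothesis B_orthogonal :
  forall a b : 'I_n, a != b -> Defs.form S (col a B) (col b B) = 0.
Hypothesis B_normal : forall a : 'I_n,
  Defs.form S (col a B) (col a B) = 1 \/ Defs.form S (col a B) (col a B) = -1.

Lemma permutes_up_to_sign_form (M : 'M[R]_n) :
  permutes_up_to_sign M B -> forall a b : 'I_n,
    Defs.form S (M *m col a B) (col b B) = 1 \/
    Defs.form S (M *m col a B) (col b B) = -1 \/
    Defs.form S (M *m col a B) (col b B) = 0.
Proof.
move=> permM a b; have [c [e [e_sign ->]]] := permM a; rewrite formZl.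
have [<- | cb] := eqVneq c b; last by rewrite B_orthogonal // mulr0; right; right.
by case: e_sign (B_normal c) => -> [] ->; rewrite ?mul1r ?mulN1r ?opprK;
  [left|right; left|right; left|left].
Qed.

End SignedPermutation.

Section GeneratorMap.
Variables r s : nat.

Notation b_last := (gen_b s (@ord_max r)).

(* [Phi k] is [y * b_{r+1}] when [phi_factor k = Some y], and [b_{r+1}] when
   it is [None]. *)
Definition phi_factor (k : 'I_(r + s.+1)) : option 'I_(s + r.+1) :=
  match split k with
  | inl i => Some (gen_b s (widen_ord (leqnSn r) i))
  | inr j => omap (gen_a r) (unlift ord_max j)
  end.

Lemma JPhiE (R : realFieldType) n (J : 'I_(s + r.+1) -> 'M[R]_n) k :
  JPhi r s J k = if phi_factor k is Some y then J y *m J b_last else J b_last.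
Proof. by rewrite /JPhi /phi_factor; case: (split k) => // j; case: unlift. Qed.

Lemma phi_factor_spec k :
  if phi_factor k is Some y then
    (k < r)%N /\ val y = (s + k)%N \/
    (r <= k)%N /\ (k < r + s)%N /\ val y = (k - r)%N
  else val k = (r + s)%N.
Proof.
rewrite /phi_factor; case: splitP => [i -> | j kE].
  by left; have := ltn_ord i; rewrite /=; lia.
case: unliftP => [j' jE | jE] /=; last by move: kE; rewrite jE /=; lia.
have j'E : j = j' :> nat by rewrite jE /= /bump leqNgt ltn_ord.
by right; move: j'E (ltn_ord j') => /= *; lia.
Qed.

Lemma phi_factor_inj : injective phi_factor.
Proof.
move=> k l E; apply: val_inj.
have := phi_factor_spec k; have := phi_factor_spec l; rewrite E.
by case: (phi_factor l) => [y|] /=; lia.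
Qed.

Lemma phi_factor_neq k y : phi_factor k = Some y -> y != b_last.
Proof.
move=> E; have := phi_factor_spec k; rewrite E => yE.
by apply/eqP => yb; move: yE; rewrite yb /=; have := ltn_ord k; lia.
Qed.

Lemma sig_phi_factor (R : realFieldType) k y :
  phi_factor k = Some y -> sig R y = - sig R k.
Proof.
move=> E; have := phi_factor_spec k; rewrite E /sig => yE.
by case: ifP => ?; case: ifP => ?; rewrite ?opprK //; exfalso; simpl in *; lia.
Qed.

Lemma sig_phi_factor_None (R : realFieldType) k :
  phi_factor k = None -> sig R k = -1.
Proof.
move=> E; have := phi_factor_spec k; rewrite E /sig => kE.
by case: ifP => // ?; exfalso; simpl in *; lia.
Qed.

Lemma gen_ip_phi_factor (R : realFieldType) k l y y' :
  phi_factor k = Some y -> phi_factor l = Some y' ->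
  gen_ip R y y' = - gen_ip R k l.
Proof.
move=> Ek El; rewrite /gen_ip.
have [kl | kl] := eqVneq k l.
  by move: El; rewrite -kl Ek => -[<-]; rewrite eqxx (sig_phi_factor R Ek).
have [yy' | _] := eqVneq y y'; last by rewrite oppr0.
by case/eqP: kl; apply: phi_factor_inj; rewrite Ek El yy'.
Qed.

End GeneratorMap.

Section PhiRepresentation.
Variables (R : realFieldType) (r s n : nat) (J : 'I_(s + r.+1) -> 'M[R]_n).

Local Notation b_last := (gen_b s (@ord_max r)).
Local Notation P := (J b_last).

Lemma JPhi_permutes (B : 'M[R]_n) :
  (forall x, permutes_up_to_sign (J x) B) ->
  forall k, permutes_up_to_sign (JPhi r s J k) B.
Proof.
move=> permJ k; rewrite JPhiE; case: (phi_factor k) => [y|] //.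
exact: permutes_up_to_sign_mul.
Qed.

Hypothesis CL : is_clrep J.

Lemma sig_b_last : sig R b_last = -1.
Proof. by rewrite /sig /= ltnNge leq_addr. Qed.

Lemma b_last_invol : P *m P = 1%:M.
Proof. by rewrite clrep_sqr // sig_b_last opprK. Qed.

Lemma skew_JPhi (S : 'M[R]_n) :
  (forall x, skew S (J x)) -> forall k, skew S (JPhi r s J k).
Proof.
move=> skJ k; rewrite JPhiE; case Ek: (phi_factor k) => [y|] //.
by apply: skew_mul => //; apply: clrep_anticomm => //; apply: phi_factor_neq Ek.
Qed.

Lemma is_clrep_JPhi : is_clrep (JPhi r s J).
Proof.
have P_anticomm k y : phi_factor k = Some y -> P *m J y = - (J y *m P).
  by move=> Ek; apply: clrep_anticomm; rewrite // eq_sym (phi_factor_neq Ek).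
have gen_ip_neq (k l : 'I_(r + s.+1)) :
    k != l -> (- (2%:R * gen_ip R k l))%:M = 0 :> 'M_n.
  by move=> kl; rewrite /gen_ip (negbTE kl) mulr0 oppr0 raddf0.
move=> k l; rewrite !JPhiE.
case Ek: (phi_factor k) => [y|]; case El: (phi_factor l) => [y'|].
- rewrite (mulmx_anticomm_invol _ b_last_invol (P_anticomm _ _ El)).
  rewrite (mulmx_anticomm_invol _ b_last_invol (P_anticomm _ _ Ek)).
  by rewrite -opprD CL (gen_ip_phi_factor R Ek El) mulrN opprK raddfN.
- have kl : k != l by apply: contra_eq_neq Ek => ->; rewrite El.
  by rewrite gen_ip_neq // (anticomm_invol_add b_last_invol (P_anticomm _ _ Ek)).
- have kl : k != l by apply: contra_eq_neq Ek => ->; rewrite El.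
  by rewrite gen_ip_neq // addrC (anticomm_invol_add b_last_invol (P_anticomm _ _ El)).
- have <- : k = l by apply: phi_factor_inj; rewrite Ek El.
  by rewrite CL /gen_ip !eqxx sig_b_last (sig_phi_factor_None R Ek).
Qed.

End PhiRepresentation.

Theorem corollary3p2 (R : realFieldType) (r s n : nat)
  (S : 'M[R]_n) (J : 'I_(s + r.+1) -> 'M[R]_n) (B : 'M[R]_n) :
  admissible S J ->
  integral_basis S J B ->
  (forall x : 'I_(s + r.+1), permutes_up_to_sign (J x) B) ->
  admissible S (JPhi r s J) /\ integral_basis S (JPhi r s J) B.
Proof.
move=> /admissibleP [SP CL skJ] [B_unit B_orthogonal B_normal _] permJ.
split; first by apply/admissibleP; split; [| exact: is_clrep_JPhi | exact: skew_JPhi].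
split=> // k a b.
by apply: permutes_up_to_sign_form => //; apply: JPhi_permutes.
Qed.
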